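(* In the cylindrical dual-RSK algorithm (with fixed $N\ge1$, $L$, $L-N\ge1$), let $w_1<w_2$ be entries of $\{1,\dots,N\}$ that are column-inserted successively (first $w_1$, then $w_2$) into a cylindrical infinite Young tableau during the same time step. Then it cannot happen that the insertion of $w_1$ is interior while the insertion of $w_2$ is cylindrical. In other words, among the insertions performed at a given time step, all the cylindrical insertions happen before the interior insertions.
   Context: Fix integers $N\ge1$, $L$ with $L-N\ge1$. Innovation data is a two-row array $\binom{a_1\,a_2\,\cdots}{b_1\,b_2\,\cdots}$ with $a_i\in\mathbb{N}$ nondecreasing, $b_i\in\{1,\dots,N\}$, and $b_i\le b_{i+1}$ whenever $a_i=a_{i+1}$. A cylindrical infinite Young tableau consists of a main tableau $\mathcal{P}_0$ (a filling of a Young diagram by positive integers, rows weakly increasing to the right, columns strictly increasing downward; columns have at most $N$ boxes, although entries of $\mathcal{P}_0$ may pass below row $N$ after an overflow) together with copies $\mathcal{P}_m$, $m\in\mathbb{Z}$: $\mathcal{P}_m$ is obtained from $\mathcal{P}_0$ by adding $mN$ to every entry and translating it $m(L-N)$ columns to the left and $mN$ rows down. If $\lambda=(\lambda_1\ge\dots\ge\lambda_N)$ are the row lengths of $\mathcal{P}_0$, there is an overflow of the first $k$ rows when $\lambda_1=\dots=\lambda_k=L-N+\lambda_N$. Cylindrical dual-RSK: starting from the empty tableau, at time $n$ the entries $b_i$ with $a_i=n$ are inserted in the order of the array. To insert $b$: in the current column of $\mathcal{P}_0$ (starting with the first), if every entry is strictly smaller than $b$, $b$ is appended at the end of the column; otherwise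 $b$ replaces the uppermost entry $w\ge b$ of the column and $w$ is inserted in the same way into the next column; this is done simultaneously in each copy $\mathcal{P}_m$ with the entry $b+mN$. When the first $k$ rows overflow and $1\le b\le k$, the insertion displaces a box of $\mathcal{P}_0$ into the period $\mathcal{P}_{-1}$, which may in turn displace a box into $\mathcal{P}_{-2}$, and so on (at most $N$ times); afterwards all copies are updated to agree with the new $\mathcal{P}_0$. A tableau $\mathcal{Q}$ records in each newly created box the time of its creation and a tableau $\mathcal{W}$ records the winding of the insertion path that created it (the number of times the insertion path crossed between periods). The insertion path of an insertion is the set of coordinates of boxes changed by it. An insertion path is interior if it did not move past the first row (did not cross between periods), and cylindrical otherwise. *)

(* Cylindrical dual-RSK, modelled on the periodic (global)
   picture of the cylindrical infinite Young tableau. *)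
From mathcomp Require Import all_boot all_order all_algebra.
Set Implicit Arguments. Unset Strict Implicit. Unset Printing Implicit Defensive.
Import Order.TTheory GRing.Theory Num.Theory.
Local Open Scope ring_scope.

(* The main tableau P_0, 0-based: [T r c] is the entry of P_0 in row r
   (0 <= r < N) and column c (c >= 0), or None if there is no box. *)
Definition tab := int -> int -> option int.

Definition empty_tab : tab := fun _ _ => None.

(* The global cell (i, j) belongs to the
   copy P_m with m = i div N; it is the cell (i mod N, j + m (L - N)) of P_0,
   with entry shifted by m N.  (P_m = P_0 translated m(L-N) columns to the
   left, m N rows down, entries + m N.) *)
Definition copy_of (N : nat) (i : int) : int := (i %/ N%:Z)%Z.

Definition gget (N L : nat) (T : tab) (i j : int) : option int :=
  let m := copy_of N i in
  let c := j + m * (L - N)%N%:Z in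
  if 0 <= c then omap (fun x => x + m * N%:Z) (T (i %% N%:Z)%Z c) else None.

(* Writing value v in the global cell (i, j): modifies P_0 (hence, by
   periodicity, all copies simultaneously). *)
Definition gset (N L : nat) (T : tab) (i j v : int) : tab :=
  let m := copy_of N i in
  fun r c => if (r == (i %% N%:Z)%Z) && (c == j + m * (L - N)%N%:Z)
             then Some (v - m * N%:Z) else T r c.

(* Top row of the global column j: first row of the copy P_m with m minimal
   such that column j of the global picture meets column >= 0 of P_m. *)
Definition col_top (N L : nat) (j : int) : int :=
  - (j %/ (L - N)%N%:Z)%Z * N%:Z.

Definition col_end (N L : nat) (T : tab) (j i : int) : Prop :=
  (forall i', gget N L T i' j <> None -> i' < i) /\
  (i = col_top N L j \/ gget N L T (i - 1) j <> None).

Inductive ins_from (N L : nat) : tab -> int -> int -> tab -> seq (int * int) -> Prop :=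
| ins_bump T v j i x T' p :
    gget N L T i j = Some x -> v <= x ->
    (forall i' y, i' < i -> gget N L T i' j = Some y -> y < v) ->
    ins_from N L (gset N L T i j v) x (j + 1) T' p ->
    ins_from N L T v j T' ((i, j) :: p)
| ins_append T v j i :
    (forall i' y, gget N L T i' j = Some y -> y < v) ->
    col_end N L T j i ->
    ins_from N L T v j (gset N L T i j v) [:: (i, j)].

Definition insert (N L : nat) (T : tab) (b : nat) (T' : tab) (p : seq (int * int)) :=
  ins_from N L T b%:Z 0 T' p.

Inductive run (N L : nat) : tab -> seq nat -> tab -> seq (seq (int * int)) -> Prop :=
| run_nil T : run N L T [::] T [::]
| run_cons T b bs T1 T2 p ps :
    insert N L T b T1 p -> run N L T1 bs T2 ps -> run N L T (b :: bs) T2 (p :: ps).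

(* Innovation data: the two-row array (a_i over b_i) as a list of pairs. *)
Definition innovation_data (N : nat) (d : seq (nat * nat)) : Prop :=
  (forall k, (k.+1 < size d)%N ->
     ((nth (0, 0) d k).1 <= (nth (0, 0) d k.+1).1)%N /\
     ((nth (0, 0) d k).1 = (nth (0, 0) d k.+1).1 ->
        ((nth (0, 0) d k).2 <= (nth (0, 0) d k.+1).2)%N)) /\
  (forall k, (k < size d)%N -> (0 < (nth (0, 0) d k).2 <= N)%N).

(* An insertion path is interior if it stays in the main period P_0 (global
   rows 0..N-1), i.e. never crosses between periods; cylindrical otherwise. *)
Definition interior (N : nat) (p : seq (int * int)) : bool :=
  all (fun ij => (0 <= ij.1) && (ij.1 < N%:Z)) p.

Definition cylindrical (N : nat) (p : seq (int * int)) : bool := ~~ interior N p.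

(* In the periodic picture, every column insertion of a letter of [1..N]
   keeps the tableau conditions and moves only boxes of rows < N: a bumped
   entry lands in the next column at most as low as the row it left, and
   column 0 of P_0 has an entry > r in row r.  If the insertion of w1 stays
   in rows >= 0, its path is a staircase such that anything strictly below it
   in a column exceeds the next step of the staircase; the insertion of
   w2 > w1 then bumps strictly below the staircase in every column, so it
   stays in rows >= 0 as well. *)

From mathcomp Require Import all_boot all_order all_algebra.
From mathcomp Require Import zify ring.
Set Implicit Arguments. Unset Strict Implicit. Unset Printing Implicit Defensive.
Import Order.TTheory GRing.Theory Num.Theory.
Local Open Scope ring_scope.

Section Cylinder.

Variables N L : nat.
Hypothesis N_gt0 : (0 < N)%N.
Hypothesis LN_gt0 : (0 < L - N)%N.

Local Notation n := N%:Z.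
Local Notation K := (L - N)%N%:Z.
Local Notation get := (gget N L).
Local Notation set := (gset N L).
Local Notation top := (col_top N L).

Let n_gt0 : 0 < n. Proof. by rewrite ltz_nat. Qed.
Let K_gt0 : 0 < K. Proof. by rewrite ltz_nat. Qed.
Let n_neq0 : n != 0. Proof. by rewrite gt_eqF. Qed.
Let K_neq0 : K != 0. Proof. by rewrite gt_eqF. Qed.

Lemma col_top_le i j : (top j <= i) = (0 <= j + (i %/ n)%Z * K).
Proof.
have := lez_divRL (- (i %/ n)%Z) j K_gt0; rewrite mulNr.
by rewrite /col_top -lez_divRL //; lia.
Qed.

Lemma gget_col_top T i j x : get T i j = Some x -> top j <= i.
Proof. by rewrite col_top_le /gget /copy_of; case: ifP. Qed.

Lemma col_top_shift j d : top (j - d * K) = top j + d * n.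
Proof.
by rewrite /col_top -mulNr addrC divzMDl //; ring.
Qed.

Lemma col_top_succ j : top (j + 1) <= top j.
Proof.
by rewrite /col_top !mulNr lerN2 ler_pM2r // lez_pdiv2r // lerDl.
Qed.

Lemma col_top0 : top 0 = 0.
Proof. by rewrite /col_top div0z oppr0 mul0r. Qed.

Lemma col_topN1 : top (-1) = n.
Proof.
rewrite /col_top.
suff -> : ((-1) %/ K)%Z = -1 by rewrite opprK mul1r.
apply/eqP; rewrite eq_le lez_divRL // -ltzD1 ltz_divLR //; lia.
Qed.

Lemma gget_shift T i j d :
  get T (i + d * n) (j - d * K) = omap (fun x => x + d * n) (get T i j).
Proof.
rewrite /gget /copy_of (addrC i) divzMDl // modzMDl.
have -> : j - d * K + (d + (i %/ n)%Z) * K = j + (i %/ n)%Z * K by ring.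
by case: ifP => // _; case: (T _ _) => //= x; congr Some; ring.
Qed.

Definition same_box i j i' j' := exists d, i' = i + d * n /\ j' = j - d * K.

Lemma same_boxP i j i' j' : reflect (same_box i j i' j')
  (((i' %% n)%Z == (i %% n)%Z) && (j' + (i' %/ n)%Z * K == j + (i %/ n)%Z * K)).
Proof.
apply: (iffP andP) => [[/eqP ei /eqP ej] | [d [-> ->]]].
  exists ((i' %/ n)%Z - (i %/ n)%Z); split; last by lia.
  by rewrite mulrBl; have := divz_eq i' n; have := divz_eq i n; rewrite ei; lia.
rewrite (addrC i) divzMDl // modzMDl.
have -> : j - d * K + (d + (i %/ n)%Z) * K = j + (i %/ n)%Z * K by ring.
by rewrite !eqxx.
Qed.

Lemma same_box_col i j i' d : same_box i j i' (j - d * K) -> i' = i + d * n.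
Proof. by case=> d' [-> /addrI/oppr_inj/(mulIf K_neq0) ->]. Qed.

Lemma same_box_same_col i j i' : same_box i j i' j -> i' = i.
Proof.
case=> d [-> ej]; suff -> : d = 0 by rewrite mul0r addr0.
by apply: (mulIf K_neq0); rewrite mul0r; lia.
Qed.

Lemma same_box_row i j d j' : same_box i j (i + d * n) j' -> j' = j - d * K.
Proof. by case=> d' [/addrI/(mulIf n_neq0) -> ->]. Qed.

Lemma gget_gset_here T i j v : top j <= i -> get (set T i j v) i j = Some v.
Proof.
rewrite col_top_le => visible; rewrite /gget /gset /copy_of visible.
by rewrite !eqxx /= subrK.
Qed.

Lemma gget_gset_same T i j v d : top j <= i ->
  get (set T i j v) (i + d * n) (j - d * K) = Some (v + d * n).
Proof. by move=> top_i; rewrite gget_shift gget_gset_here. Qed.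

Lemma gget_gset_other T i j v i' j' : ~ same_box i j i' j' ->
  get (set T i j v) i' j' = get T i' j'.
Proof.
by move/(introF (same_boxP _ _ _ _)) => other; rewrite /gget /gset /copy_of other.
Qed.

Lemma gget_gset_col T i j v a d : a != i + d * n ->
  get (set T i j v) a (j - d * K) = omap (fun x => x + d * n) (get T (a - d * n) j).
Proof.
move=> ne; rewrite -[in LHS](subrK (d * n) a) gget_gset_other ?gget_shift //.
by move/same_box_col; rewrite subrK => ea; rewrite ea eqxx in ne.
Qed.

Lemma gget_gset_row T i j v d c : c != 0 ->
  get (set T i j v) (i + d * n) (j - d * K + c) =
  omap (fun x => x + d * n) (get T i (j + c)).
Proof.
move/eqP=> ne; rewrite (_ : j - d * K + c = j + c - d * K); last by ring.
rewrite gget_gset_other ?gget_shift // => /same_box_row ec.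
by apply: ne; lia.
Qed.

(* [gget_gt_copy] says that the entries of P_0 are positive. *)
Record cyl_tableau T : Prop := {
  gget_gt_copy : forall i j x, get T i j = Some x -> (i %/ n)%Z * n < x;
  gget_col_lt : forall a b j x y,
    a < b -> get T a j = Some x -> get T b j = Some y -> x < y;
  gget_row_le : forall i j x y, get T i j = Some x -> get T i (j + 1) = Some y -> x <= y;
  gget_col_closed : forall a b j,
    top j <= a -> a <= b -> get T b j != None -> get T a j != None;
  gget_left_closed : forall i j, top j <= i -> get T i (j + 1) != None -> get T i j != None
}.

Lemma cyl_tableau_empty : cyl_tableau empty_tab.
Proof.
have E i j : get empty_tab i j = None by rewrite /gget; case: ifP.
by split=> [i j x | a b j x y _ | i j x y | a b j _ _ | i j _]; rewrite E.
Qed.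

Section WriteBox.

Variables (T : tab) (i j v : int).
Hypothesis T_tab : cyl_tableau T.
Hypothesis top_i : top j <= i.
Hypothesis v_gt_copy : (i %/ n)%Z * n < v.
Hypothesis above_lt : forall a y, a < i -> get T a j = Some y -> y < v.
Hypothesis below_gt : forall b y, i < b -> get T b j = Some y -> v < y.
Hypothesis left_le : forall y, get T i (j - 1) = Some y -> y <= v.
Hypothesis right_ge : forall y, get T i (j + 1) = Some y -> v <= y.
Hypothesis above_filled : forall a, top j <= a -> a < i -> get T a j != None.
Hypothesis left_filled : top (j - 1) <= i -> get T i (j - 1) != None.

Local Notation T' := (set T i j v).

Lemma gset_gt_copy i0 j0 x : get T' i0 j0 = Some x -> (i0 %/ n)%Z * n < x.
Proof.
have [[d [-> ->]] | other] := same_boxP i j i0 j0; last first.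
  by rewrite gget_gset_other //; apply: gget_gt_copy.
rewrite gget_gset_same // => -[<-]; rewrite (addrC i) divzMDl // mulrDl addrC ltrD2r.
exact: v_gt_copy.
Qed.

Lemma gset_col_lt a b j0 x y :
  a < b -> get T' a j0 = Some x -> get T' b j0 = Some y -> x < y.
Proof.
have [[d [-> ->]] | other_a] := same_boxP i j a j0 => ab.
  rewrite gget_gset_same // gget_gset_col; last by rewrite (gt_eqF ab).
  case E: (get T _ _) => [y'|] //= [<-] [<-].
  by rewrite ltrD2r; apply: below_gt E; rewrite ltrBrDr.
move: ab; have [[d [-> ->]] | other_b] := same_boxP i j b j0 => ab.
  rewrite gget_gset_same // gget_gset_col; last by rewrite (lt_eqF ab).
  case E: (get T _ _) => [x'|] //= [<-] [<-].
  by rewrite ltrD2r; apply: above_lt E; rewrite ltrBlDr.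
by rewrite !gget_gset_other //; apply: gget_col_lt ab.
Qed.

Lemma gset_row_le i0 j0 x y :
  get T' i0 j0 = Some x -> get T' i0 (j0 + 1) = Some y -> x <= y.
Proof.
have [[d [-> ->]] | other] := same_boxP i j i0 j0.
  rewrite gget_gset_same // gget_gset_row // => -[<-].
  case E: (get T _ _) => [y'|] //= [<-].
  by rewrite lerD2r; apply: right_ge.
have [[d [-> ej]] | other'] := same_boxP i j i0 (j0 + 1).
  have -> : j0 = j - d * K - 1 by rewrite -ej addrK.
  rewrite subrK gget_gset_same // gget_gset_row //.
  case E: (get T _ _) => [x'|] //= [<-] [<-].
  by rewrite lerD2r; apply: left_le.
by rewrite !gget_gset_other //; apply: gget_row_le.
Qed.

Lemma gset_col_closed a b j0 :
  top j0 <= a -> a <= b -> get T' b j0 != None -> get T' a j0 != None.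
Proof.
have [[d [-> ->]] | other_a] := same_boxP i j a j0; first by rewrite gget_gset_same //.
have [[d [eb ej]] | other_b] := same_boxP i j b j0; last first.
  by rewrite !gget_gset_other //; apply: gget_col_closed.
subst j0 => top_a ab _.
have ne : a != i + d * n by apply/eqP => ea; apply: other_a; exists d.
rewrite gget_gset_col //.
move: top_a; rewrite col_top_shift -lerBrDr => top_a.
have lt : a - d * n < i by rewrite ltrBlDr lt_neqAle ne -eb ab.
by case: (get T _ _) (above_filled top_a lt).
Qed.

Lemma gset_left_closed i0 j0 :
  top j0 <= i0 -> get T' i0 (j0 + 1) != None -> get T' i0 j0 != None.
Proof.
have [[d [-> ->]] | other] := same_boxP i j i0 j0; first by rewrite gget_gset_same //.
have [[d [-> ej]] | other'] := same_boxP i j i0 (j0 + 1); last first.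
  by rewrite !gget_gset_other //; apply: gget_left_closed.
have -> : j0 = j - d * K - 1 by rewrite -ej addrK.
rewrite gget_gset_row // (_ : j - d * K - 1 = j - 1 - d * K); last by ring.
rewrite col_top_shift lerD2r => /left_filled.
by case: (get T i (j - 1)).
Qed.

Lemma cyl_tableau_gset : cyl_tableau T'.
Proof.
split; [exact: gset_gt_copy | exact: gset_col_lt | exact: gset_row_le
       | exact: gset_col_closed | exact: gset_left_closed].
Qed.

End WriteBox.

Lemma gget_col0_ge T (r : nat) y : cyl_tableau T -> get T r 0 = Some y -> r%:Z + 1 <= y.
Proof.
move=> T_tab; elim: r y => [|r IH] y E.
  by have := gget_gt_copy T_tab E; rewrite div0z mul0r.
have : get T r 0 != None.
  by apply: (gget_col_closed T_tab (b := r.+1)); rewrite ?col_top0 ?E //; lia.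
case E': (get T _ _) => [y'|] // _.
have r_lt : r%:Z < r.+1%:Z by rewrite ltz_nat.
by have := IH _ E'; have := gget_col_lt T_tab r_lt E' E; lia.
Qed.

Lemma gget_colN1 T i : i < n -> get T i (-1) = None.
Proof.
move=> i_lt; case E: (get T i (-1)) => [x|] //.
by have := gget_col_top E; rewrite col_topN1 leNgt i_lt.
Qed.

(* The value [v] is about to enter column [j]: either [j = 0] and [v] is the
   inserted letter, or [v] was bumped from row [ip < N] of column [j - 1],
   where it was replaced by [u <= v]. *)
Definition insertable T v j : Prop :=
  cyl_tableau T /\
  (j = 0 /\ 1 <= v <= n \/
   0 < j /\ exists ip u, [/\ ip < n, get T ip (j - 1) = Some u, u <= v
                          & forall y, get T ip j = Some y -> v <= y]).

Section InsertBox.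

Variables (T : tab) (v j i : int).
Hypothesis T_ins : insertable T v j.
Hypothesis top_i : top j <= i.
Hypothesis above_filled : forall a, top j <= a -> a < i -> get T a j != None.
Hypothesis above_lt : forall a y, a < i -> get T a j = Some y -> y < v.
Hypothesis below_gt : forall b y, i < b -> get T b j = Some y -> v < y.
Hypothesis right_ge : forall y, get T i (j + 1) = Some y -> v <= y.

Let T_tab : cyl_tableau T := T_ins.1.

Lemma insert_row_first : j = 0 -> v <= n -> i < n.
Proof.
move=> j0 v_le; rewrite ltNge; apply/negP => n_le.
move: above_filled above_lt; rewrite j0 col_top0 => filled lt_v.
have : get T (n - 1) 0 != None by apply: filled; lia.
case E: (get T _ _) => [y|] // _.
have := lt_v _ _ _ E; rewrite (_ : n - 1 = N.-1%:Z) in E; last by lia.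
by have := gget_col0_ge T_tab E; lia.
Qed.

Lemma insert_row_le_bumped ip : get T ip (j - 1) != None ->
  (forall y, get T ip j = Some y -> v <= y) -> i <= ip.
Proof.
case E: (get T _ _) => [u|] // _ right_ge_ip; rewrite leNgt; apply/negP => ip_lt.
have top_ip : top j <= ip.
  by have := col_top_succ (j - 1); rewrite subrK; have := gget_col_top E; lia.
have := above_filled top_ip ip_lt; case E': (get T _ _) => [y|] // _.
by have := right_ge_ip _ E'; have := above_lt ip_lt E'; lia.
Qed.

Lemma insert_row_lt : i < n.
Proof.
case: T_ins.2 => [[j0 /andP [_ v_le]] | [_ [ip [u [ip_lt Eu _ right_ge_ip]]]]].
  exact: insert_row_first.
by apply: le_lt_trans ip_lt; apply: insert_row_le_bumped; rewrite ?Eu.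
Qed.

Lemma cyl_tableau_insert : cyl_tableau (set T i j v).
Proof.
have i_lt := insert_row_lt.
case: T_ins.2 => [[j0 /andP [v_ge v_le]] | [_ [ip [u [ip_lt Eu u_le right_ge_ip]]]]].
  have i_ge : 0 <= i by move: top_i; rewrite j0 col_top0.
  apply: cyl_tableau_gset => //; rewrite ?j0 ?sub0r ?gget_colN1 ?col_topN1 //.
    by rewrite divz_small ?mul0r; [lia | rewrite absz_nat; lia].
  by rewrite leNgt i_lt.
have i_le := insert_row_le_bumped (ip := ip) ltac:(by rewrite Eu) right_ge_ip.
apply: cyl_tableau_gset => //.
- have := gget_gt_copy T_tab Eu; have := lez_pdiv2r (le0z_nat N) i_le.
  rewrite -(ler_pM2r n_gt0); lia.
- move=> y E; apply: le_trans u_le.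
  move: i_le; rewrite le_eqVlt => /orP [/eqP ei | i_lt_ip].
    by move: E; rewrite ei Eu => -[->].
  exact/ltW/(gget_col_lt T_tab i_lt_ip E Eu).
- by move=> top_i'; apply: (gget_col_closed T_tab top_i' i_le); rewrite Eu.
Qed.

End InsertBox.

Lemma insertable_bump T v j i x : insertable T v j ->
  get T i j = Some x -> v <= x ->
  (forall a y, a < i -> get T a j = Some y -> y < v) ->
  i < n /\ insertable (set T i j v) x (j + 1).
Proof.
move=> T_ins Ex v_le above_lt; have T_tab := T_ins.1.
have top_i := gget_col_top Ex.
have above_filled a : top j <= a -> a < i -> get T a j != None.
  by move=> top_a /ltW a_le; apply: (gget_col_closed T_tab top_a a_le); rewrite Ex.
have below_gt b y : i < b -> get T b j = Some y -> v < y.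
  by move=> ib /(gget_col_lt T_tab ib Ex); apply: le_lt_trans.
have right_ge y : get T i (j + 1) = Some y -> v <= y.
  by move/(gget_row_le T_tab Ex); apply: le_trans.
have i_lt := insert_row_lt T_ins top_i above_filled above_lt.
have j_ge : 0 <= j by case: T_ins.2 => [[-> _] | [j_gt _]] //; apply: ltW.
split=> //; split; first exact: cyl_tableau_insert.
right; split; first by lia.
exists i, v; split=> //; first by rewrite addrK gget_gset_here.
move=> y; have := @gget_gset_row T i j v 0 1 (oner_neq0 _); rewrite mul0r addr0 subr0 => ->.
case E: (get T i (j + 1)) => [y1|] //= [<-].
by rewrite addr0; have := gget_row_le T_tab Ex E.
Qed.

Lemma col_end_top T j i : col_end N L T j i -> top j <= i.
Proof.
case=> _ [-> // | ]; case E: (get T _ _) => [y|] // _.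
by have := gget_col_top E; lia.
Qed.

Lemma insertable_append T v j i : insertable T v j ->
  (forall a y, get T a j = Some y -> y < v) -> col_end N L T j i ->
  i < n /\ cyl_tableau (set T i j v).
Proof.
move=> T_ins all_lt i_end; have T_tab := T_ins.1.
have top_i := col_end_top i_end; case: i_end => below_none top_or_filled.
have above_filled a : top j <= a -> a < i -> get T a j != None.
  move=> top_a a_lt; case: top_or_filled => [top_eq | /eqP prev_filled]; first by lia.
  by apply: (gget_col_closed T_tab top_a _ prev_filled); lia.
have above_lt a y : a < i -> get T a j = Some y -> y < v by move=> _; apply: all_lt.
have below_gt b y : i < b -> get T b j = Some y -> v < y.
  by move=> i_lt E; have := below_none b; rewrite E => /(_ ltac:(by [])); lia.
have right_ge y : get T i (j + 1) = Some y -> v <= y.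
  move=> E; have : get T i j != None by apply: (gget_left_closed T_tab top_i); rewrite E.
  by move/eqP/below_none; rewrite ltxx.
split; first exact: insert_row_lt T_ins top_i above_filled above_lt.
exact: cyl_tableau_insert T_ins top_i above_filled above_lt below_gt right_ge.
Qed.

Lemma ins_from_cyl_tableau T v j T' p : ins_from N L T v j T' p -> insertable T v j ->
  cyl_tableau T' /\ all (fun c => c.1 < n) p.
Proof.
elim=> {T v j T' p} [T v j i x T' p Ex v_le above_lt _ IH | T v j i all_lt i_end] T_ins.
  have [i_lt T'_ins] := insertable_bump T_ins Ex v_le above_lt.
  by have [T'_tab p_lt] := IH T'_ins; rewrite /= i_lt.
by have [i_lt T'_tab] := insertable_append T_ins all_lt i_end; rewrite /= i_lt.
Qed.

Lemma ins_from_cols T v j T' p : ins_from N L T v j T' p -> forall q, q \in p -> j <= q.2.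
Proof.
elim=> {T v j T' p} [T v j i x T' p _ _ _ _ IH | T v j i _ _] q.
  by rewrite in_cons => /orP [/eqP -> // | /IH]; lia.
by rewrite mem_seq1 => /eqP ->.
Qed.

Lemma ins_from_gget_other T v j T' p i0 j0 : ins_from N L T v j T' p ->
  (forall q : int * int, q \in p -> ~ same_box q.1 q.2 i0 j0) -> get T' i0 j0 = get T i0 j0.
Proof.
elim=> {T v j T' p} [T v j i x T' p _ _ _ _ IH | T v j i _ _] other.
  rewrite IH => [|q q_in]; last by apply: other; rewrite in_cons q_in orbT.
  by apply: gget_gset_other; apply: (other (i, j)); rewrite mem_head.
by apply: gget_gset_other; apply: (other (i, j)); rewrite mem_head.
Qed.

Lemma ins_from_gget T v j T' p i0 j0 z : ins_from N L T v j T' p ->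
  get T' i0 j0 = Some z ->
  get T i0 j0 = Some z \/
  exists (q : int * int) (d w : int),
    [/\ q \in p, i0 = q.1 + d * n, j0 = q.2 - d * K, z = w + d * n & v <= w].
Proof.
elim=> {T v j T' p} [T v j i x T' p Ex v_le _ _ IH | T v j i _ i_end] E.
  have top_i := gget_col_top Ex.
  case: (IH E) => [E1 | [q [d [w [q_in -> -> -> x_le]]]]]; last first.
    by right; exists q, d, w; split; rewrite ?in_cons ?q_in ?orbT //; apply: le_trans x_le.
  have [[d [ei ej]] | other] := same_boxP i j i0 j0.
    move: E1; rewrite ei ej gget_gset_same // => -[<-].
    by right; exists (i, j), d, v; split; rewrite ?mem_head.
  by left; rewrite -(gget_gset_other T v other).
have [[d [ei ej]] | other] := same_boxP i j i0 j0.
  move: E; rewrite ei ej gget_gset_same ?(col_end_top i_end) // => -[<-].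
  by right; exists (i, j), d, v; split; rewrite ?mem_head.
by left; rewrite -(gget_gset_other T v other).
Qed.

Definition staircase T j J (r : int -> int) : Prop :=
  [/\ j <= J, forall c, j <= c <= J -> 0 <= r c,
      forall c, j <= c < J -> forall i x, r c < i -> get T i c = Some x ->
        exists2 z, get T (r (c + 1)) (c + 1) = Some z & z < x
    & forall i, r J < i -> get T i J = None].

Lemma staircase_succ T j J r : staircase T j J r -> j < J -> staircase T (j + 1) J r.
Proof.
case=> _ r_ge step last_none j_lt; split=> // [|c c_in|c c_in]; first by lia.
  by apply: r_ge; lia.
by apply: step; lia.
Qed.

Lemma gget_gset_right T i j v i0 j0 : i < n -> 0 <= i0 -> j < j0 ->
  get (set T i j v) i0 j0 = get T i0 j0.
Proof.
move=> i_lt i0_ge j_lt; apply: gget_gset_other => -[d [ei ej]].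
have d_lt : d < 0 by rewrite -(pmulr_rlt0 _ K_gt0) mulrC; lia.
have : d * n <= - n by rewrite -mulN1r ler_pM2r // -ltzD1 addNr.
lia.
Qed.

Lemma staircase_gset T i j v c J r : i < n -> j < c ->
  staircase T c J r -> staircase (set T i j v) c J r.
Proof.
move=> i_lt j_lt [c_le r_ge step last_none]; split=> // [c0 c0_in i0 x r_lt | i0 r_lt].
  have r_ge0 := r_ge c0 ltac:(lia); have r'_ge0 := r_ge (c0 + 1) ltac:(lia).
  by rewrite !gget_gset_right //; try lia; exact: step.
have r_ge0 := r_ge J ltac:(lia).
by rewrite gget_gset_right //; try lia; exact: last_none.
Qed.

Lemma staircase_cons T j J r i : staircase T (j + 1) J r -> 0 <= i ->
  (forall i1 x1, i < i1 -> get T i1 j = Some x1 ->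
     exists2 z, get T (r (j + 1)) (j + 1) = Some z & z < x1) ->
  staircase T j J (fun c => if c == j then i else r c).
Proof.
case=> J_ge r_ge step last_none i_ge step_j.
have J_neq : (J == j) = false by apply/eqP; lia.
split=> [|c c_in|c c_in|]; rewrite ?J_neq //; first by lia.
- by case: eqP => // /eqP c_neq; apply: r_ge; lia.
- rewrite (_ : (c + 1 == j) = false); last by apply/eqP; lia.
  by case: eqP => [-> // | /eqP c_neq]; apply: step; lia.
Qed.

Lemma col_shift_gt0 a j0 d : j0 = a - d * K -> j0 < a -> 0 < d.
Proof. by move=> -> lt_a; have := K_gt0; nia. Qed.

Lemma ins_from_staircase T v j T' p : ins_from N L T v j T' p -> insertable T v j ->
  all (fun q => 0 <= q.1) p ->
  exists J r, staircase T' j J r /\ get T' (r j) j = Some v.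
Proof.
elim=> {T v j T' p} [T v j i x T' p Ex v_le above_lt ins IH | T v j i all_lt i_end] T_ins.
  case/andP=> /= i_ge p_ge; have [i_lt T1_ins] := insertable_bump T_ins Ex v_le above_lt.
  have [J [r [st head]]] := IH T1_ins p_ge.
  have right_of_j (q : int * int) : q \in p -> j < q.2.
    by move/(ins_from_cols ins); rewrite lezD1.
  exists J, (fun c => if c == j then i else r c); split; last first.
    rewrite eqxx (ins_from_gget_other ins) ?gget_gset_here ?(gget_col_top Ex) //.
    move=> q q_in [d [ei ej]]; have d_gt := col_shift_gt0 ej (right_of_j q q_in).
    by have /= := allP p_ge q q_in; nia.
  apply: staircase_cons => // i1 x1 i_lt1 E1; exists x => //.
  have [E2 | [q [d [w [q_in ei ej -> x_le]]]]] := ins_from_gget ins E1.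
    rewrite gget_gset_other in E2; first exact (gget_col_lt T_ins.1 i_lt1 Ex E2).
    by move=> /same_box_same_col ei; rewrite ei ltxx in i_lt1.
  by have := col_shift_gt0 ej (right_of_j q q_in); nia.
case/andP=> /= i_ge _; have top_i := col_end_top i_end; case: i_end => below_none _.
exists j, (fun _ => i); split; last by rewrite gget_gset_here.
split=> [|c _|c c_in|i1 i_lt1] //; first by lia.
rewrite gget_gset_other.
  case E: (get T i1 j) => [y|] //; have := below_none i1; rewrite E.
  by move=> /(_ ltac:(by [])); lia.
by move=> /same_box_same_col ei; rewrite ei ltxx in i_lt1.
Qed.

Lemma ins_below_staircase T v j T' p J r : ins_from N L T v j T' p -> insertable T v j ->
  staircase T j J r -> (exists2 z, get T (r j) j = Some z & z < v) ->
  all (fun q => 0 <= q.1) p.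
Proof.
move=> ins; elim: ins J r => {T v j T' p}
  [T v j i x T' p Ex v_le above_lt _ IH | T v j i _ i_end] J r T_ins st [z Ez z_lt].
  have T_tab := T_ins.1; have [i_lt T1_ins] := insertable_bump T_ins Ex v_le above_lt.
  case: (st) => _ r_ge step last_none.
  have r_lt : r j < i.
    rewrite ltNge le_eqVlt; apply/negP => /orP [/eqP ei | i_lt'].
      by move: Ex; rewrite ei Ez => -[ez]; move: z_lt; rewrite ez ltNge v_le.
    by have := gget_col_lt T_tab i_lt' Ex Ez; lia.
  have j_lt : j < J.
    rewrite lt_neqAle; case: st => -> _ _ _; rewrite andbT.
    by apply/eqP => ej; move: (last_none i); rewrite -ej Ex => /(_ r_lt).
  have r_ge0 := r_ge j ltac:(lia).
  rewrite /= (_ : 0 <= i) /=; last by lia.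
  apply: (IH J r T1_ins).
    by apply: staircase_gset i_lt _ (staircase_succ st j_lt); lia.
  have [z1 Ez1 z1_lt] := step j ltac:(lia) i x r_lt Ex.
  have r1_ge0 := r_ge (j + 1) ltac:(lia).
  by exists z1; rewrite ?gget_gset_right //; lia.
case: i_end => below_none _; case: st => j_le r_ge _ _.
have := below_none (r j); rewrite Ez => /(_ ltac:(by [])).
by have := r_ge j ltac:(lia); rewrite /= andbT; lia.
Qed.

Lemma insertable_letter T (b : nat) : cyl_tableau T -> (0 < b <= N)%N -> insertable T b 0.
Proof. by move=> T_tab b_in; split=> //; left; split=> //; lia. Qed.

Lemma run_consecutive T bs T' ps k : run N L T bs T' ps -> cyl_tableau T ->
  (forall b, b \in bs -> (0 < b <= N)%N) -> (k.+1 < size bs)%N ->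
  exists Ta Tb Tc, [/\ cyl_tableau Ta, insert N L Ta (nth 0%N bs k) Tb (nth [::] ps k)
                     & insert N L Tb (nth 0%N bs k.+1) Tc (nth [::] ps k.+1)].
Proof.
move=> R; elim: R k => {T bs T' ps} [T | T b bs T1 T2 p ps ins R IH] k //.
move=> T_tab letters k_lt; have T_ins := insertable_letter T_tab (letters b (mem_head _ _)).
have [T1_tab _] := ins_from_cyl_tableau ins T_ins.
case: k k_lt => [|k] k_lt; last first.
  by apply: IH => // b' b'_in; apply: letters; rewrite in_cons b'_in orbT.
move: ins; case: {IH T1_tab} R k_lt => // T0 b' bs' T3 T4 p' ps' ins' _ _ ins.
by exists T, T0, T3.
Qed.

Lemma interior_insert_lt T T1 T2 (b1 b2 : nat) p1 p2 : cyl_tableau T ->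
  (0 < b1)%N -> (b1 < b2 <= N)%N ->
  insert N L T b1 T1 p1 -> insert N L T1 b2 T2 p2 ->
  interior N p1 -> interior N p2.
Proof.
move=> T_tab b1_gt b2_in ins1 ins2 p1_int.
have T_ins1 := insertable_letter T_tab (b := b1) ltac:(lia).
have [T1_tab _] := ins_from_cyl_tableau ins1 T_ins1.
have T1_ins2 := insertable_letter T1_tab (b := b2) ltac:(lia).
have [_ p2_lt] := ins_from_cyl_tableau ins2 T1_ins2.
have p1_ge : all (fun q => 0 <= q.1) p1 by apply: sub_all p1_int => q /andP [].
have [J [r [st head]]] := ins_from_staircase ins1 T_ins1 p1_ge.
have b1_lt : b1%:Z < b2%:Z by rewrite ltz_nat; lia.
have p2_ge := ins_below_staircase ins2 T1_ins2 st (ex_intro2 _ _ b1%:Z head b1_lt).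
by apply/allP => q q_in; rewrite (allP p2_ge q q_in) (allP p2_lt q q_in).
Qed.

End Cylinder.

Local Close Scope ring_scope.
Unset Implicit Arguments.

Theorem lemma3p1 (N L : nat) (d : seq (nat * nat)) (T : tab)
    (ps : seq (seq (int * int))) (k : nat) :
  (1 <= N)%N -> (1 <= L - N)%N ->
  innovation_data N d ->
  run N L empty_tab (map snd d) T ps ->
  (k.+1 < size d)%N ->
  (nth (0, 0) d k).1 = (nth (0, 0) d k.+1).1 ->
  ((nth (0, 0) d k).2 < (nth (0, 0) d k.+1).2)%N ->
  ~ (interior N (nth [::] ps k) /\ cylindrical N (nth [::] ps k.+1)).
Proof.
move=> N_gt0 LN_gt0 [_ letters] R k_lt _ b_lt [int1 /negP[]].
have letters' b : b \in map snd d -> (0 < b <= N)%N.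
  by case/mapP=> _ /(nthP (0, 0)) [k' k'_lt <-] ->; apply: letters.
have k_lt' : (k.+1 < size (map snd d))%N by rewrite size_map.
have [Ta [Tb [Tc [Ta_tab ins1 ins2]]]] :=
  run_consecutive N_gt0 LN_gt0 R (cyl_tableau_empty N L) letters' k_lt'.
rewrite !(nth_map (0, 0)) ?(ltnW k_lt) // in ins1 ins2.
have /andP [b1_gt _] := letters k (ltnW k_lt).
have /andP [_ b2_le] := letters k.+1 k_lt.
by apply: (interior_insert_lt N_gt0 LN_gt0 Ta_tab b1_gt _ ins1 ins2 int1); rewrite b_lt.
Qed.
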